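(* Let $n,k$ be integers with $8\le 2k\le n-2$ and let $\lambda\in\overline{\mathcal{U}}_{T_{n,n-2k+1}}$. Then the Young diagram $\mathrm{KN}(S_\lambda)$ has exactly $2n-4+2k$ cells; consequently the sum of the hook lengths of the cells on its main diagonal is $2n-4+2k$.
   Context: A partition of $N$ into distinct parts is a sequence $\lambda=(\lambda_1<\dots<\lambda_t)$ of positive integers with sum $N$ and $t\ge 2$, identified with its set of parts. Missing parts: $\mathcal{M}_\lambda=\{1,\dots,\lambda_t\}\setminus\lambda$. $\lambda$ is refinable if two distinct missing parts sum to a part of $\lambda$, unrefinable otherwise; $\mathcal{U}_N$ is the set of unrefinable partitions of $N$. An element of $\mathcal{U}_N$ is maximal if its largest part is the maximum of the largest parts of elements of $\mathcal{U}_N$; $\widetilde{\mathcal{U}}_N$ is the set of these and $\overline{\mathcal{U}}_N=\{\lambda\in\widetilde{\mathcal{U}}_N:\#\mathcal{M}_\lambda=\lfloor\lambda_t/2\rfloor\}$. $T_n=n(n+1)/2$, $T_{n,d}=T_n-d$. $S_\lambda=\mathbb{N}_0\setminus\lambda$. The Keith–Nath transformation sends a set $S\subseteq\mathbb{N}_0$ with $0\in S$ and finite complement to the Young diagram $\mathrm{KN}(S)$ whose boundary is the lattice path that, starting at the origin, takes for $j=0,1,\dots,\max(\mathbb{N}_0\setminus S)$ an east step if $j\in S$ and a north step otherwise. Hook length of a cell = (cells to its right in its row) + (cells below it in its column) + 1; the main diagonal consists of the cells in row $i$, column $i$. *)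

From mathcomp Require Import all_boot.
Set Implicit Arguments. Unset Strict Implicit. Unset Printing Implicit Defensive.

Definition distinct_partition (N : nat) (l : seq nat) : bool :=
  [&& sorted ltn l, all (fun x => 0 < x) l, sumn l == N & 1 < size l].

Definition largest (l : seq nat) : nat := \max_(x <- l) x.

Definition missing (l : seq nat) : seq nat :=
  [seq m <- iota 1 (largest l) | m \notin l].

Definition refinable (l : seq nat) : bool :=
  has (fun a => has (fun b => (a != b) && (a + b \in l)) (missing l)) (missing l).

Definition unrefinable (N : nat) (l : seq nat) : bool :=
  distinct_partition N l && ~~ refinable l.

Definition maximal_unrefinable (N : nat) (l : seq nat) : Prop :=
  unrefinable N l /\ (forall mu, unrefinable N mu -> largest mu <= largest l).

Definition Ubar (N : nat) (l : seq nat) : Prop :=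
  maximal_unrefinable N l /\ size (missing l) = (largest l)./2.

Definition T (n : nat) : nat := (n * n.+1)./2.
Definition Td (n d : nat) : nat := T n - d.

(* Keith--Nath path of S (a boolean predicate on N_0) up to m = max(N_0 \ S):
   step j (j = 0..m) is north (true) iff j \notin S, east (false) otherwise. *)
Definition KN_path (S : pred nat) (m : nat) : seq bool :=
  [seq ~~ S j | j <- iota 0 m.+1].

(* Young diagram (row lengths, top row first) whose boundary is the path:
   the row of a north step has as many cells as there are east steps before it. *)
Definition path_rows (p : seq bool) : seq nat :=
  rev [seq count negb (take i p) | i <- iota 0 (size p) & nth false p i].

Definition KN (S : pred nat) (m : nat) : seq nat := path_rows (KN_path S m).

(* S_lambda = N_0 \ lambda, whose complement has maximum lambda_t *)
Definition S_of (l : seq nat) : pred nat := fun j => j \notin l.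
Definition KN_of (l : seq nat) : seq nat := KN (S_of l) (largest l).

(* Cells of a Young diagram given by its row lengths: (row, column), 0-based. *)
Definition cells (rows : seq nat) : seq (nat * nat) :=
  [seq (i, j) | i <- iota 0 (size rows), j <- iota 0 (nth 0 rows i)].

Definition hook (rows : seq nat) (c : nat * nat) : nat :=
  let: (i, j) := c in
  (nth 0 rows i - j.+1) + count (fun r => j < r) (drop i.+1 rows) + 1.

Definition diagonal (rows : seq nat) : seq (nat * nat) :=
  [seq c <- cells rows | c.1 == c.2].

From mathcomp Require Import all_boot zify.

(* A maximal unrefinable partition lam of N = T_n - (n-2k+1) has largest part
   L >= 2n-4, since explicit unrefinable partitions of N with largest part 2n-4
   exist.  Lying in Ubar, lam has exactly L - L/2 parts; those other than L are
   distinct and positive, so N >= L + C(L - L/2, 2), which forces L = 2n-4 and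
   n-2 parts.  In KN(S_lam) the row of the part i has i - #{parts below i}
   cells, so the diagram has N - C(n-2, 2) = 2n-4+2k cells.  Finally the hooks
   of the diagonal cells of any Young diagram partition its cells. *)

Lemma bin2S m : 'C(m.+1, 2) = 'C(m, 2) + m.
Proof. by rewrite binS bin1. Qed.

Lemma sumn_iota1 m : sumn (iota 1 m) = 'C(m.+1, 2).
Proof. by rewrite -bin2_sum /index_iota subn0 -sumnE. Qed.

Lemma T_bin2 n : T n = 'C(n.+1, 2).
Proof. by rewrite /T bin2 mulnC. Qed.

Lemma T_eq_bin2_sub2 n : 2 <= n -> T n = 'C(n - 2, 2) + 3 * n - 3.
Proof. by case: n => [|[|m]] // _; rewrite T_bin2 !bin2S subn2 /=; lia. Qed.

Lemma largest_ub [l : seq nat] [x : nat] : x \in l -> x <= largest l.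
Proof. by move=> lx; apply: leq_bigmax_seq lx _. Qed.

Lemma largest_mem [l : seq nat] : l != [::] -> largest l \in l.
Proof.
rewrite /largest; elim: l => [//|a [|b l] IH] _; first by rewrite big_seq1 mem_head.
rewrite big_cons in_cons; case: leqP => _; last by rewrite eqxx.
by rewrite IH ?orbT.
Qed.

Lemma largest_eq (l : seq nat) x :
  x \in l -> {in l, forall p, p <= x} -> largest l = x.
Proof.
move=> lx ub; apply/eqP; rewrite eqn_leq largest_ub // andbT.
by apply/bigmax_leqP_seq => p lp _; apply: ub.
Qed.

Lemma mem_missing (l : seq nat) m :
  (m \in missing l) = (0 < m <= largest l) && (m \notin l).
Proof. by rewrite mem_filter mem_iota andbC; congr (_ && _); lia. Qed.

Lemma size_add_size_missing (l : seq nat) :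
  uniq l -> all (fun x => 0 < x) l -> size l + size (missing l) = largest l.
Proof.
move=> l_uniq l_pos.
have l_perm : perm_eq l [seq m <- iota 1 (largest l) | m \in l].
  apply: uniq_perm => //; first by rewrite filter_uniq ?iota_uniq.
  move=> x; rewrite mem_filter mem_iota; case lx: (x \in l) => //=.
  by have := allP l_pos x lx; have := largest_ub lx; lia.
by rewrite (perm_size l_perm) !size_filter count_predC size_iota.
Qed.

Lemma refinablePn (l : seq nat) :
  reflect (forall a b, a \in missing l -> b \in missing l -> a != b -> a + b \notin l)
          (~~ refinable l).
Proof.
apply: (iffP hasPn) => [unref a b ma mb ab | unref a ma].
  by move/hasPn/(_ b mb): (unref a ma); rewrite ab.
by apply/hasPn => b mb; case: eqVneq => //= ab; apply: unref.
Qed.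

Lemma path_ltn_sumn [c : nat] [s : seq nat] :
  path ltn c s -> c * size s + 'C((size s).+1, 2) <= sumn s.
Proof.
elim: s c => [|x s IH] c /=; first by rewrite muln0 bin_small.
case/andP=> cx /IH; rewrite !bin2S => sum_s.
have : c.+1 * (size s).+1 <= x * (size s).+1 by rewrite leq_mul2r cx orbT.
lia.
Qed.

Lemma largest_add_bin2_leq_sumn [l : seq nat] :
  sorted ltn l -> all (fun x => 0 < x) l -> largest l + 'C(size l, 2) <= sumn l.
Proof.
move=> l_sorted l_pos; case: (eqVneq l [::]) => [-> | l_nil].
  by rewrite /largest big_nil.
have l_perm := perm_to_rem (largest_mem l_nil).
rewrite (perm_sumn l_perm) (perm_size l_perm) /= leq_add2l.
have rem_path : sorted ltn (0 :: rem (largest l) l).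
  apply: (subseq_sorted ltn_trans (s2 := 0 :: l)); first by rewrite /= rem_subseq.
  by rewrite /= path_min_sorted.
by have := path_ltn_sumn rem_path; rewrite size_rem ?largest_mem // prednK ?lt0n ?size_eq0.
Qed.

Definition gaps_below (l : seq nat) (i : nat) : nat :=
  count (fun j => j \notin l) (iota 0 i).

Lemma gaps_below_homo (l : seq nat) : {homo gaps_below l : i j / i <= j}.
Proof. by move=> i j ij; rewrite /gaps_below -(subnKC ij) iotaD count_cat leq_addr. Qed.

Lemma count_mem_iota0 (l : seq nat) i :
  uniq l -> count (mem l) (iota 0 i) = count (fun x => x < i) l.
Proof.
move=> l_uniq; rewrite -!size_filter; apply/perm_size/uniq_perm.
- by rewrite filter_uniq ?iota_uniq.
- by rewrite filter_uniq.
by move=> x; rewrite !mem_filter mem_iota /= add0n andbC.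
Qed.

Lemma gaps_below_add_count (l : seq nat) i :
  uniq l -> gaps_below l i + count (fun x => x < i) l = i.
Proof.
move=> l_uniq; rewrite -count_mem_iota0 // addnC.
by rewrite (count_predC (mem l)) size_iota.
Qed.

Lemma sumn_count_ltn (l : seq nat) :
  sorted ltn l -> sumn [seq count (fun x => x < i) l | i <- l] = 'C(size l, 2).
Proof.
elim: l => [|a l IH] //= a_l.
have l_gt_a : all (fun x => a < x) l := order_path_min ltn_trans a_l.
have -> : count (fun x => x < a) l = 0.
  by apply/eqP; rewrite -leqn0 leqNgt -has_count; apply/hasPn => x /(allP l_gt_a) /=; lia.
rewrite ltnn bin2S add0n.
have -> : [seq (a < i) + count (fun x => x < i) l | i <- l] =
          [seq (count (fun x => x < i) l).+1 | i <- l].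
  by apply/eq_in_map => i /(allP l_gt_a) ->.
rewrite -(IH (path_sorted a_l)) !sumnE !big_map addnC -sum1_size -big_split.
by apply: eq_bigr.
Qed.

Lemma filter_iota_largest (l : seq nat) :
  sorted ltn l -> [seq i <- iota 0 (largest l).+1 | i \in l] = l.
Proof.
move=> l_sorted; apply: (irr_sorted_eq ltn_trans ltnn) => //.
  by apply: sorted_filter; [exact: ltn_trans | exact: iota_ltn_sorted].
move=> x; rewrite mem_filter mem_iota; case lx: (x \in l) => //=.
by have := largest_ub lx; lia.
Qed.

Lemma KN_of_sorted (l : seq nat) :
  sorted ltn l -> KN_of l = rev [seq gaps_below l i | i <- l].
Proof.
move=> l_sorted; rewrite /KN_of /KN /path_rows /KN_path size_map size_iota.
set p := [seq ~~ S_of l j | j <- _].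
have nth_p i : i < (largest l).+1 -> nth false p i = (i \in l).
  by move=> i_lt; rewrite (nth_map 0) ?size_iota // nth_iota // /S_of negbK.
rewrite (eq_in_filter (a2 := mem l)); last by move=> i; rewrite mem_iota => /nth_p.
rewrite filter_iota_largest //; congr rev; apply/eq_in_map => i li.
rewrite -map_take count_map take_iota (minn_idPl (leqW (largest_ub li))).
by apply: eq_count => j; rewrite /= /S_of negbK.
Qed.

Lemma sorted_KN_of (l : seq nat) : sorted ltn l -> sorted geq (KN_of l).
Proof.
move=> l_sorted; rewrite KN_of_sorted // rev_sorted.
by apply: homo_sorted l_sorted => i j /ltnW; apply: gaps_below_homo.
Qed.

Lemma sumn_KN_of [l : seq nat] :
  sorted ltn l -> sumn (KN_of l) + 'C(size l, 2) = sumn l.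
Proof.
move=> l_sorted; have l_uniq : uniq l := sorted_uniq ltn_trans ltnn l_sorted.
rewrite KN_of_sorted // sumn_rev -sumn_count_ltn // !sumnE !big_map -big_split.
by apply: eq_bigr => i _; apply: gaps_below_add_count.
Qed.

Lemma size_cells (s : seq nat) : size (cells s) = sumn s.
Proof.
rewrite /cells size_allpairs_dep (eq_map (g := nth 0 s)) => [|i]; last by rewrite size_iota.
by rewrite -/(mkseq _ _) mkseq_nth.
Qed.

Definition diag_hooks (s : seq nat) : nat :=
  \sum_(0 <= i < size s) if i < nth 0 s i then hook s (i, i) else 0.

Lemma sum_diagonal_hook_eq (s : seq nat) :
  \sum_(c <- diagonal s) hook s c = diag_hooks s.
Proof.
rewrite /diagonal big_filter big_mkcond /cells big_allpairs_dep /diag_hooks /index_iota subn0.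
apply: eq_bigr => i _ /=; rewrite -big_mkcond /=.
rewrite (eq_bigl (pred1 i)) => [|j]; last by rewrite eq_sym.
case: ifP => i_lt.
  by rewrite -big_filter filter_pred1_uniq ?iota_uniq ?mem_iota // big_seq1.
rewrite big_hasC //; apply/hasPn => j; rewrite mem_iota /=.
by apply: contraTN => /eqP ->; rewrite i_lt.
Qed.

Lemma diag_hooks_cons (a : nat) (s : seq nat) :
  diag_hooks (a :: s) =
  (if 0 < a then a + count (fun r => 0 < r) s else 0) + diag_hooks (map predn s).
Proof.
rewrite /diag_hooks size_map big_nat_recl //.
congr (_ + _); first by rewrite /hook /= drop0; case: a => //= a; lia.
apply: eq_big_nat => i /andP[_ i_lt].
rewrite /hook /= -map_drop count_map (nth_map 0) //.
rewrite (eq_count (a2 := fun r => i.+1 < r)) => [|r]; last by rewrite /= ltn_predRL.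
rewrite ltn_predRL; case: ifP => // _; lia.
Qed.

Lemma sumn_predn (s : seq nat) :
  sumn (map predn s) + count (fun r => 0 < r) s = sumn s.
Proof. by elim: s => //= a s <-; case: a => /=; lia. Qed.

Lemma diag_hooks_sorted (s : seq nat) : sorted geq s -> diag_hooks s = sumn s.
Proof.
have [m] := ubnP (size s); elim: m s => // m IH [|a s] s_lt a_s.
  by rewrite /diag_hooks big_geq.
have pred_sorted : sorted geq (map predn s).
  by apply: homo_sorted (path_sorted a_s) => x y yx; rewrite /= -!subn1 leq_sub2r.
rewrite diag_hooks_cons IH ?size_map //= -(sumn_predn s).
case: a a_s {s_lt} => [|a] a_s /=; last by lia.
have s_le0 : all (geq 0) s := order_path_min (rev_trans leq_trans) a_s.
by rewrite (eq_in_count (a2 := pred0)) ?count_pred0 ?addn0 // => x /(allP s_le0); case: x.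
Qed.

Lemma sum_diagonal_hook (s : seq nat) :
  sorted geq s -> \sum_(c <- diagonal s) hook s c = size (cells s).
Proof. by move=> s_sorted; rewrite sum_diagonal_hook_eq diag_hooks_sorted // size_cells. Qed.

Lemma sorted_ltn_cat (s1 s2 : seq nat) :
  sorted ltn s1 -> sorted ltn s2 -> {in s1 & s2, forall a b, a < b} ->
  sorted ltn (s1 ++ s2).
Proof.
rewrite !(sorted_pairwise ltn_trans) pairwise_cat => -> -> s12.
by rewrite /= andbT; apply/allrelP.
Qed.

(* All missing parts are at least n-1, so no two of them sum to a part. *)
Definition tight_witness (n : nat) : seq nat := iota 1 (n - 2) ++ [:: 2 * n - 4].

Lemma tight_witness_unrefinable (n : nat) : 4 <= n ->
  unrefinable (T n - 3) (tight_witness n) /\ largest (tight_witness n) = 2 * n - 4.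
Proof.
move=> n4; set w := tight_witness n.
have mem_w p : (p \in w) = (0 < p <= n - 2) || (p == 2 * n - 4).
  by rewrite mem_cat mem_iota inE; congr (_ || _); lia.
have w_largest : largest w = 2 * n - 4.
  by apply: largest_eq => [|p]; rewrite mem_w; lia.
split=> //; apply/andP; split; first (apply/and4P; split).
- apply: sorted_ltn_cat; rewrite ?iota_ltn_sorted // => a b.
  by rewrite mem_iota inE => ? /eqP ->; lia.
- by apply/allP => p; rewrite mem_w; lia.
- rewrite sumn_cat sumn_iota1 /= bin2S T_eq_bin2_sub2; lia.
- by rewrite size_cat size_iota /=; lia.
by apply/refinablePn => a b; rewrite !mem_missing w_largest !mem_w; lia.
Qed.

(* The missing parts are n-k-2 and the m in [n-2, 2n-5] other than n+k-2.
   Two of them sum to at least 2n-k-4 > n-3; they reach 2n-4 only through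
   m = n+k-2, and n+k-2 only through m = 2k, which is missing iff 2k = n-2. *)
Definition witness (n k : nat) : seq nat :=
  rem (n - k - 2) (iota 1 (n - 3)) ++ [:: n + k - 2; 2 * n - 4].

Lemma witness_unrefinable [n k : nat] : 1 <= k -> 2 * k < n - 2 ->
  unrefinable (Td n (n - 2 * k + 1)) (witness n k) /\ largest (witness n k) = 2 * n - 4.
Proof.
move=> k1 kn; set w := witness n k.
have y_mem : n - k - 2 \in iota 1 (n - 3) by rewrite mem_iota; lia.
have mem_w p : (p \in w) = [|| (0 < p <= n - 3) && (p != n - k - 2), p == n + k - 2 | p == 2 * n - 4].
  rewrite mem_cat mem_rem_uniq ?iota_uniq // !inE mem_iota andbC.
  by congr ((_ && _) || _); lia.
have w_largest : largest w = 2 * n - 4.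
  by apply: largest_eq => [|p]; rewrite mem_w; lia.
split=> //; apply/andP; split; first (apply/and4P; split).
- apply: sorted_ltn_cat => [||a b].
  + by apply: (subseq_sorted ltn_trans (rem_subseq _ _)); apply: iota_ltn_sorted.
  + by rewrite /= andbT; lia.
  by move=> /mem_rem; rewrite mem_iota !inE; lia.
- by apply/allP => p; rewrite mem_w; lia.
- rewrite sumn_cat /=.
  have := perm_sumn (perm_to_rem y_mem); rewrite sumn_iota1 /= /Td.
  rewrite (_ : (n - 3).+1 = n - 2); last by lia.
  rewrite T_eq_bin2_sub2; lia.
- by rewrite size_cat size_rem // size_iota /=; lia.
by apply/refinablePn => a b; rewrite !mem_missing w_largest !mem_w; lia.
Qed.

Lemma exists_unrefinable_largest [n k : nat] : 1 <= k -> 2 * k <= n - 2 ->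
  exists2 mu, unrefinable (Td n (n - 2 * k + 1)) mu & largest mu = 2 * n - 4.
Proof.
move=> k1 kn; case: (ltnP (2 * k) (n - 2)) => [k_lt | k_ge].
  by have [] := witness_unrefinable k1 k_lt; exists (witness n k).
have [] := @tight_witness_unrefinable n; first by lia.
by exists (tight_witness n); rewrite // /Td (_ : n - 2 * k + 1 = 3) //; lia.
Qed.

Lemma Ubar_shape [n k : nat] [lam : seq nat] :
  1 <= k -> 2 * k <= n - 2 -> Ubar (Td n (n - 2 * k + 1)) lam ->
  largest lam = 2 * n - 4 /\ size lam = n - 2.
Proof.
move=> k1 kn [[/andP[/and4P[lam_sorted lam_pos /eqP lam_sum _] _] lam_max] lam_missing].
have lam_uniq : uniq lam := sorted_uniq ltn_trans ltnn lam_sorted.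
have [mu mu_unref mu_largest] := exists_unrefinable_largest k1 kn.
have L_ge : 2 * n - 4 <= largest lam by rewrite -mu_largest lam_max.
have size_L : size lam + (largest lam)./2 = largest lam.
  by rewrite -lam_missing size_add_size_missing.
have L_half := odd_double_half (largest lam).
suff L_le : largest lam <= 2 * n - 4 by split; lia.
rewrite leqNgt; apply/negP => L_gt.
have sum_lb := largest_add_bin2_leq_sumn lam_sorted lam_pos.
have bin2_lb : 'C(n - 1, 2) <= 'C(size lam, 2) by apply: leq_bin2l; lia.
have := bin2S (n - 2); rewrite (_ : (n - 2).+1 = n - 1); last by lia.
move: lam_sum; rewrite /Td T_eq_bin2_sub2; lia.
Qed.

Theorem proposition5p1 (n k : nat) (lam : seq nat) :
  8 <= 2 * k -> 2 * k <= n - 2 ->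
  Ubar (Td n (n - 2 * k + 1)) lam ->
  size (cells (KN_of lam)) = 2 * n - 4 + 2 * k /\
  \sum_(c <- diagonal (KN_of lam)) hook (KN_of lam) c = 2 * n - 4 + 2 * k.
Proof.
move=> k4 kn lam_Ubar.
have k1 : 1 <= k by lia.
have [_ lam_size] := Ubar_shape k1 kn lam_Ubar.
case: lam_Ubar => [[/andP[/and4P[lam_sorted _ /eqP lam_sum _] _] _] _].
suff cells_eq : size (cells (KN_of lam)) = 2 * n - 4 + 2 * k.
  by rewrite sum_diagonal_hook ?sorted_KN_of.
have := sumn_KN_of lam_sorted; rewrite size_cells lam_size lam_sum /Td T_eq_bin2_sub2; lia.
Qed.
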